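(* Let $I=[s,t]\subseteq\mathbb R/\mathbb Z$ be an $R$-interval, and let $(c_1,c_2)$ be either (blue, red) or (red, blue). Then there exist points $x_1,x_2$ with $s<x_1<x_2<t$ (in the cyclic order of $I$) such that $[s,x_1],[x_1,x_2],[x_2,t]$ are $R$-intervals, $x_1$ has color $c_1$ and $x_2$ has color $c_2$.
   Context: Let $\sigma_3(t)=3t$ on $\mathbb R/\mathbb Z$. An interval $I=[s,t]\subseteq\mathbb R/\mathbb Z$ is an $R$-interval if there is $n\ge0$ such that $\sigma_3^n$ maps $(s,t)$ homeomorphically onto $(0,1)$, $(0,\frac23)$ or $(\frac13,1)$. Colors of $3$-adic rationals: a point $p/3^n$ with $n\ge1$, $0<p<3^n$, $3\nmid p$ is red if $p\equiv1\pmod 3$ and blue if $p\equiv2\pmod3$; the point $0$ is blue. *)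

From Stdlib Require Import Reals ZArith.
Open Scope R_scope.

(* The circle R/Z: a point is represented by any real lift.
   sigma3^n on R/Z is x |-> 3^n x mod 1; we use the representative in [0,1). *)
Definition sigma3_iter (n : nat) (x : R) : R := frac_part (3 ^ n * x).

(* The three target arcs (0,1), (0,2/3), (1/3,1) of R/Z, as (a,b) with
   the arc being {y in [0,1) | a < y < b}. *)
Definition target_arc (a b : R) : Prop :=
  (a = 0 /\ b = 1) \/ (a = 0 /\ b = 2/3) \/ (a = 1/3 /\ b = 1).

(* An arc [s,t] of R/Z (counterclockwise from s to t) is represented by real
   lifts s < t <= s + 1; t = s + 1 is the full circle.  The open arc (s,t)
   is the projection of the real open interval (s,t), which is injective
   on it.  [s,t] is an R-interval iff for some n, sigma3^n maps (s,t)
   bijectively (equivalently, homeomorphically, since it is continuous and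
   both sides are open arcs) onto one of the target arcs. *)
Definition Rinterval (s t : R) : Prop :=
  s < t <= s + 1 /\
  exists (n : nat) (a b : R), target_arc a b /\
    (forall x, s < x < t -> a < sigma3_iter n x < b) /\
    (forall x y, s < x < t -> s < y < t ->
        sigma3_iter n x = sigma3_iter n y -> x = y) /\
    (forall y, a < y < b -> exists x, s < x < t /\ sigma3_iter n x = y).

Inductive color := Red | Blue.

Definition triadic_with_residue (r : Z) (x : R) : Prop :=
  exists (n : nat) (p k : Z),
    (1 <= n)%nat /\ (0 < p < 3 ^ Z.of_nat n)%Z /\ ~ (3 | p)%Z /\
    (p mod 3 = r)%Z /\ x = IZR p / 3 ^ n + IZR k.

Definition has_color (c : color) (x : R) : Prop :=
  match c with
  | Red => triadic_with_residue 1 x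
  | Blue => (exists k : Z, x = IZR k) \/ triadic_with_residue 2 x
  end.

(* Every R-interval is the image [(k+a)/3^n, (k+b)/3^n] of a target arc (a,b)
   under an inverse branch of sigma3^n, and conversely.  Inverse branches
   compose and preserve the residue mod 3 of triadic numerators, so it suffices
   to split the three target arcs (0,1), (0,2/3), (1/3,1) by hand. *)

From Stdlib Require Import Reals ZArith Lra Lia.
Open Scope R_scope.

Lemma frac_part_eq (k : Z) (w : R) : IZR k <= w < IZR k + 1 -> frac_part w = w - IZR k.
Proof.
  intros [Hkw Hwk]. unfold frac_part, Int_part.
  assert (Hup : (k + 1)%Z = up w) by (apply tech_up; rewrite plus_IZR; lra).
  rewrite <- Hup. replace (k + 1 - 1)%Z with k by lia. reflexivity.
Qed.

Lemma pow3_gt0 (n : nat) : 0 < 3 ^ n.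
Proof. apply pow_lt; lra. Qed.

Lemma target_arc_bounds (a b : R) : target_arc a b -> 0 <= a /\ a < b /\ b <= 1.
Proof. intros [[-> ->] | [[-> ->] | [-> ->]]]; lra. Qed.

Definition branch (n : nat) (k : Z) (x : R) : R := (IZR k + x) / 3 ^ n.

Lemma mul_pow3_branch (n : nat) (k : Z) (x : R) : 3 ^ n * branch n k x = IZR k + x.
Proof. unfold branch. field. apply pow_nonzero. lra. Qed.

Lemma branch_inv (m : nat) (k : Z) (x : R) : x = branch m k (3 ^ m * x - IZR k).
Proof. unfold branch. field. apply pow_nonzero. lra. Qed.

Lemma branch_lt (n : nat) (k : Z) (x y : R) : x < y -> branch n k x < branch n k y.
Proof.
  intros Hxy. pose proof (pow3_gt0 n).
  apply Rmult_lt_reg_l with (3 ^ n); [lra|]. rewrite !mul_pow3_branch. lra.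
Qed.

Lemma branch_comp (m n : nat) (j k : Z) (x : R) :
  branch n k (branch m j x) = branch (m + n) (k * 3 ^ Z.of_nat m + j) x.
Proof.
  pose proof (pow3_gt0 m); pose proof (pow3_gt0 n).
  unfold branch. rewrite plus_IZR, mult_IZR, <- pow_IZR, pow_add. field. lra.
Qed.

Lemma sigma3_iter_branch (m : nat) (k : Z) (y : R) :
  0 <= y < 1 -> sigma3_iter m (branch m k y) = y.
Proof.
  intros Hy. unfold sigma3_iter. rewrite mul_pow3_branch, (frac_part_eq k) by lra. ring.
Qed.

Definition standard_arc (u v : R) : Prop :=
  exists (m : nat) (k : Z) (a b : R), target_arc a b /\ u = branch m k a /\ v = branch m k b.

Lemma standard_arc_branch (n : nat) (k : Z) (u v : R) :
  standard_arc u v -> standard_arc (branch n k u) (branch n k v).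
Proof.
  intros (m & j & a & b & Hab & -> & ->).
  exists (m + n)%nat, (k * 3 ^ Z.of_nat m + j)%Z, a, b.
  split; [exact Hab|]. split; apply branch_comp.
Qed.

Lemma Rinterval_of_standard_arc (u v : R) : standard_arc u v -> Rinterval u v.
Proof.
  intros (m & k & a & b & Hab & -> & ->).
  pose proof (pow3_gt0 m) as H3. pose proof (target_arc_bounds _ _ Hab) as Hb.
  assert (Hin : forall x, branch m k a < x < branch m k b ->
                  a < 3 ^ m * x - IZR k < b).
  { intros x [Hax Hxb]. apply (Rmult_lt_compat_l (3 ^ m)) in Hax, Hxb; [|lra..].
    rewrite mul_pow3_branch in Hax, Hxb. lra. }
  assert (Hsig : forall x, branch m k a < x < branch m k b ->
                   sigma3_iter m x = 3 ^ m * x - IZR k).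
  { intros x Hx. specialize (Hin x Hx).
    rewrite (branch_inv m k x) at 1. apply sigma3_iter_branch. lra. }
  split; [split|].
  - apply branch_lt. lra.
  - assert (H3m : 1 <= 3 ^ m) by (clear; induction m; simpl; lra).
    apply Rmult_le_reg_l with (3 ^ m); [lra|].
    rewrite Rmult_plus_distr_l, !mul_pow3_branch. nra.
  - exists m, a, b. split; [exact Hab|]. split; [|split].
    + intros x Hx. rewrite Hsig by exact Hx. apply Hin, Hx.
    + intros x y Hx Hy Hxy. rewrite !Hsig in Hxy by assumption.
      apply Rmult_eq_reg_l with (3 ^ m); lra.
    + intros y Hy. exists (branch m k y). split.
      * split; apply branch_lt; lra.
      * apply sigma3_iter_branch. lra.
Qed.

Lemma frac_part_affine_on_gap (u v : R) :
  u < v -> (forall z : Z, ~ (u < IZR z < v)) ->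
  exists k : Z, forall w, u < w < v -> frac_part w = w - IZR k.
Proof.
  intros Huv Hgap. set (k := Int_part ((u + v) / 2)).
  destruct (base_Int_part ((u + v) / 2)) as [Hk1 Hk2]; fold k in Hk1, Hk2.
  exists k. intros w Hw. apply frac_part_eq. split.
  - destruct (Rle_lt_dec (IZR k) w) as [H|H]; [exact H|].
    exfalso. apply (Hgap k). lra.
  - destruct (Rlt_le_dec w (IZR k + 1)) as [H|H]; [exact H|].
    exfalso. apply (Hgap (k + 1)%Z). rewrite plus_IZR. lra.
Qed.

Lemma open_interval_eq (u v a b : R) :
  u < v -> a < b ->
  (forall w, u < w < v -> a < w < b) -> (forall y, a < y < b -> u < y < v) ->
  u = a /\ v = b.
Proof.
  intros Huv Hab Hsub Hsup. split.
  - destruct (Rtotal_order u a) as [H|[H|H]]; [exfalso | exact H | exfalso].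
    + specialize (Hsub ((u + Rmin a v) / 2)).
      unfold Rmin in Hsub. destruct (Rle_dec a v); lra.
    + specialize (Hsup ((a + Rmin u b) / 2)).
      unfold Rmin in Hsup. destruct (Rle_dec u b); lra.
  - destruct (Rtotal_order v b) as [H|[H|H]]; [exfalso | exact H | exfalso].
    + specialize (Hsup ((b + Rmax v a) / 2)).
      unfold Rmax in Hsup. destruct (Rle_dec v a); lra.
    + specialize (Hsub ((v + Rmax b u) / 2)).
      unfold Rmax in Hsub. destruct (Rle_dec b u); lra.
Qed.

Lemma standard_arc_of_Rinterval (s t : R) : Rinterval s t -> standard_arc s t.
Proof.
  intros [[Hst _] (n & a & b & Hab & Hinto & _ & Honto)].
  pose proof (pow3_gt0 n) as H3. pose proof (target_arc_bounds _ _ Hab) as Hb.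
  set (u := 3 ^ n * s). set (v := 3 ^ n * t).
  assert (Huv : u < v) by (apply Rmult_lt_compat_l; lra).
  assert (Hfrac : forall w, u < w < v -> a < frac_part w < b).
  { intros w Hw. assert (Hw3 : 3 ^ n * (w / 3 ^ n) = w) by (field; lra).
    specialize (Hinto (w / 3 ^ n)). unfold sigma3_iter in Hinto. rewrite Hw3 in Hinto.
    apply Hinto. unfold u, v in Hw. split; apply Rmult_lt_reg_l with (3 ^ n); lra. }
  (* An integer in (u, v) would have fractional part 0, outside (a, b). *)
  assert (Hgap : forall z : Z, ~ (u < IZR z < v)).
  { intros z Hz. specialize (Hfrac _ Hz). rewrite (frac_part_eq z) in Hfrac; lra. }
  destruct (frac_part_affine_on_gap u v Huv Hgap) as [k Hk].
  assert (Hsub : forall w, u - IZR k < w < v - IZR k -> a < w < b).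
  { intros w Hw. specialize (Hfrac (w + IZR k) ltac:(lra)).
    rewrite Hk in Hfrac by lra. lra. }
  assert (Hsup : forall y, a < y < b -> u - IZR k < y < v - IZR k).
  { intros y Hy. destruct (Honto y Hy) as (x & Hx & Hxy).
    assert (Hux : u < 3 ^ n * x < v) by (unfold u, v; split; apply Rmult_lt_compat_l; lra).
    unfold sigma3_iter in Hxy. rewrite Hk in Hxy by exact Hux. lra. }
  destruct (open_interval_eq (u - IZR k) (v - IZR k) a b ltac:(lra) ltac:(lra) Hsub Hsup)
    as [Hua Hvb].
  exists n, k, a, b. split; [exact Hab|].
  rewrite <- Hua, <- Hvb. split; apply branch_inv.
Qed.

Definition triadic_point (r : Z) (x : R) : Prop :=
  exists (m : nat) (p : Z), (1 <= m)%nat /\ (p mod 3 = r)%Z /\ x = branch m p 0.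

Lemma pow3_Z_succ (m : nat) : (1 <= m)%nat -> (3 ^ Z.of_nat m = 3 ^ Z.of_nat (m - 1) * 3)%Z.
Proof.
  intros Hm. replace (Z.of_nat m) with (Z.succ (Z.of_nat (m - 1))) by lia.
  rewrite Z.pow_succ_r by lia. ring.
Qed.

Lemma triadic_point_branch (r : Z) (n : nat) (k : Z) (x : R) :
  triadic_point r x -> triadic_point r (branch n k x).
Proof.
  intros (m & p & Hm & Hp & ->).
  exists (m + n)%nat, (k * 3 ^ Z.of_nat m + p)%Z. split; [lia|]. split.
  - rewrite pow3_Z_succ by exact Hm.
    replace (k * (3 ^ Z.of_nat (m - 1) * 3) + p)%Z with (p + k * 3 ^ Z.of_nat (m - 1) * 3)%Z
      by ring.
    rewrite Z.mod_add by lia. exact Hp.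
  - apply branch_comp.
Qed.

(* The defining numerator of [triadic_with_residue] must lie in (0, 3^m):
   reduce it modulo 3^m, which does not change its residue mod 3. *)
Lemma triadic_with_residue_of_point (r : Z) (x : R) :
  (r = 1 \/ r = 2)%Z -> triadic_point r x -> triadic_with_residue r x.
Proof.
  intros Hr (m & P & Hm & HP & ->).
  set (B := (3 ^ Z.of_nat m)%Z).
  assert (HB : (0 < B)%Z) by (apply Z.pow_pos_nonneg; lia).
  pose proof (Z.div_mod P B ltac:(lia)) as HPB.
  pose proof (Z.mod_pos_bound P B HB) as Hbound.
  set (p := (P mod B)%Z) in *. set (q := (P / B)%Z) in *.
  assert (Hp : (p mod 3 = r)%Z).
  { rewrite <- HP, HPB. unfold B. rewrite pow3_Z_succ by exact Hm.
    replace (3 ^ Z.of_nat (m - 1) * 3 * q + p)%Z with (p + 3 ^ Z.of_nat (m - 1) * q * 3)%Z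
      by ring.
    rewrite Z.mod_add by lia. reflexivity. }
  assert (Hp0 : p <> 0%Z) by (intros E; rewrite E, Zmod_0_l in Hp; lia).
  exists m, p, q. split; [exact Hm|]. split; [lia|]. split; [|split; [exact Hp|]].
  - intros [c ->]. rewrite Z.mod_mul in Hp by lia. lia.
  - unfold branch. rewrite HPB at 1. rewrite plus_IZR, mult_IZR. unfold B.
    rewrite <- pow_IZR. field. apply pow_nonzero. lra.
Qed.

Definition color_residue (c : color) : Z :=
  match c with Red => 1 | Blue => 2 end.

Lemma has_color_of_triadic_point (c : color) (x : R) :
  triadic_point (color_residue c) x -> has_color c x.
Proof.
  intros Hx. destruct c; simpl.
  - apply triadic_with_residue_of_point; [lia | exact Hx].
  - right. apply triadic_with_residue_of_point; [lia | exact Hx].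
Qed.

Ltac standard_arc_by m k a b :=
  exists m, k, a, b; unfold target_arc, branch; simpl; split; [lra | split; field].

Ltac triadic_point_by m p :=
  exists m, p; unfold branch; simpl; split; [lia | split; [reflexivity | field]].

Lemma target_arc_split (a b : R) (c1 c2 : color) :
  target_arc a b -> c1 <> c2 ->
  exists y1 y2, a < y1 < y2 /\ y2 < b /\
    standard_arc a y1 /\ standard_arc y1 y2 /\ standard_arc y2 b /\
    triadic_point (color_residue c1) y1 /\ triadic_point (color_residue c2) y2.
Proof.
  intros [[-> ->] | [[-> ->] | [-> ->]]] Hc; destruct c1, c2; try congruence; simpl.
  - exists (1/3), (2/3). repeat split; [lra | lra | lra | ..].
    + standard_arc_by 1%nat 0%Z 0 1.
    + standard_arc_by 1%nat 1%Z 0 1.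
    + standard_arc_by 1%nat 2%Z 0 1.
    + triadic_point_by 1%nat 1%Z.
    + triadic_point_by 1%nat 2%Z.
  - exists (2/9), (1/3). repeat split; [lra | lra | lra | ..].
    + standard_arc_by 1%nat 0%Z 0 (2/3).
    + standard_arc_by 2%nat 2%Z 0 1.
    + standard_arc_by 0%nat 0%Z (1/3) 1.
    + triadic_point_by 2%nat 2%Z.
    + triadic_point_by 1%nat 1%Z.
  - exists (1/3), (5/9). repeat split; [lra | lra | lra | ..].
    + standard_arc_by 1%nat 0%Z 0 1.
    + standard_arc_by 1%nat 1%Z 0 (2/3).
    + standard_arc_by 2%nat 5%Z 0 1.
    + triadic_point_by 1%nat 1%Z.
    + triadic_point_by 2%nat 5%Z.
  - exists (2/9), (1/3). repeat split; [lra | lra | lra | ..].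
    + standard_arc_by 1%nat 0%Z 0 (2/3).
    + standard_arc_by 2%nat 2%Z 0 1.
    + standard_arc_by 1%nat 1%Z 0 1.
    + triadic_point_by 2%nat 2%Z.
    + triadic_point_by 1%nat 1%Z.
  - exists (4/9), (2/3). repeat split; [lra | lra | lra | ..].
    + standard_arc_by 2%nat 3%Z 0 1.
    + standard_arc_by 1%nat 1%Z (1/3) 1.
    + standard_arc_by 1%nat 2%Z 0 1.
    + triadic_point_by 2%nat 4%Z.
    + triadic_point_by 1%nat 2%Z.
  - exists (2/3), (7/9). repeat split; [lra | lra | lra | ..].
    + standard_arc_by 1%nat 1%Z 0 1.
    + standard_arc_by 2%nat 6%Z 0 1.
    + standard_arc_by 1%nat 2%Z (1/3) 1.
    + triadic_point_by 1%nat 2%Z.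
    + triadic_point_by 2%nat 7%Z.
Qed.

Theorem lemmaB8 (s t : R) (c1 c2 : color) :
  Rinterval s t ->
  ((c1 = Blue /\ c2 = Red) \/ (c1 = Red /\ c2 = Blue)) ->
  exists x1 x2 : R,
    s < x1 < t /\ x1 < x2 < t /\
    Rinterval s x1 /\ Rinterval x1 x2 /\ Rinterval x2 t /\
    has_color c1 x1 /\ has_color c2 x2.
Proof.
  intros Hst Hc.
  destruct (standard_arc_of_Rinterval s t Hst) as (n & k & a & b & Hab & -> & ->).
  assert (Hc12 : c1 <> c2) by (destruct Hc as [[-> ->] | [-> ->]]; discriminate).
  destruct (target_arc_split a b c1 c2 Hab Hc12)
    as (y1 & y2 & [Ha1 H12] & H2b & Hay1 & Hy12 & Hy2b & Hy1 & Hy2).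
  exists (branch n k y1), (branch n k y2).
  split; [split|split; [split|]]; try (apply branch_lt; lra).
  split; [|split; [|split; [|split]]];
    try (apply Rinterval_of_standard_arc, standard_arc_branch; assumption).
  all: apply has_color_of_triadic_point, triadic_point_branch; assumption.
Qed.
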